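(* Let $\lambda\in(0,1)$. Consider the maps $\tau_0(x)=\lambda x$ and $\tau_{1/4}(x)=\lambda\left(x+\frac14\right)$ on $\mathbb{R}$, let $X_L$ be their attractor, and let $W(x)=\cos^2\left(\frac{2\pi x}{\lambda}\right)$. Then there is no $W$-cycle of (minimal) length $p>1$ for this system; that is, there do not exist $p\ge 2$, a point $x\in X_L$ and letters $\omega_1,\dots,\omega_p\in\{0,\frac14\}$ such that $\tau_{\omega_p}\cdots\tau_{\omega_1}x=x$, the points $x,\tau_{\omega_1}x,\dots,\tau_{\omega_{p-1}}\cdots\tau_{\omega_1}x$ form a cycle of minimal length $p$, and $W=1$ at every point of this cycle.
   Context: The attractor $X_L$ is the unique nonempty compact set $X_L\subset\mathbb{R}$ with $X_L=\tau_0(X_L)\cup\tau_{1/4}(X_L)$; equivalently $X_L=\{\sum_{k\ge1}\omega_k\lambda^k:\omega_k\in\{0,\frac14\}\}$. A cycle: if $x\in X_L$ satisfies $\tau_{\omega_p}\cdots\tau_{\omega_1}x=x$ for some $\omega_1,\dots,\omega_p\in\{0,\frac14\}$, the set $C=\{x,\tau_{\omega_1}x,\dots,\tau_{\omega_{p-1}}\cdots\tau_{\omega_1}x\}$ is a cycle; if $p$ is the minimal period with which it closes up, $C$ is a $p$-cycle. A $W$-cycle is a cycle $C$ with $W(y)=1$ for all $y\in C$. *)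

From Stdlib Require Import Reals.
Open Scope R_scope.

Definition letter (b : bool) : R := if b then / 4 else 0.

Definition tau (lam : R) (b : bool) (x : R) : R := lam * (x + letter b).

Definition in_XL (lam x : R) : Prop :=
  exists w : nat -> bool,
    infinite_sum (fun k => letter (w k) * lam ^ (S k)) x.

Definition W (lam x : R) : R := (cos (2 * PI * x / lam)) ^ 2.

Fixpoint orb (lam : R) (w : nat -> bool) (x : R) (i : nat) : R :=
  match i with
  | O => x
  | S j => tau lam (w (S j)) (orb lam w x j)
  end.

Definition is_p_cycle (lam : R) (w : nat -> bool) (x : R) (p : nat) : Prop :=
  (1 <= p)%nat /\ orb lam w x p = x /\
  (forall q : nat, (0 < q < p)%nat -> orb lam w x q <> x).

Definition is_W_cycle (lam : R) (w : nat -> bool) (x : R) (p : nat) : Prop :=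
  in_XL lam x /\ is_p_cycle lam w x p /\
  (forall i : nat, (i < p)%nat -> W lam (orb lam w x i) = 1).

From Stdlib Require Import Reals Lra Lia ZArith.
Open Scope R_scope.

(* W(y) = 1 exactly on the lattice (lam/2)Z.  If y = a lam/2 with a >= 0 and
   tau_b y = c lam/2, then c = lam a + 2 omega_b <= a + 1/2, so the integer c
   is at most a: along a W-cycle the orbit is nonincreasing.  A cycle that
   closes up must then be constant, so its minimal period is 1. *)

Lemma in_XL_nonneg lam x : 0 < lam -> in_XL lam x -> 0 <= x.
Proof.
  intros Hlam [w Hsum].
  destruct (Rle_or_lt 0 x) as [Hx | Hx]; [assumption |].
  destruct (Hsum (- x)) as [N HN]; [lra |].
  specialize (HN N (Nat.le_refl N)).
  assert (Hpartial : 0 <= sum_f_R0 (fun k => letter (w k) * lam ^ S k) N).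
  { apply cond_pos_sum; intro n. apply Rmult_le_pos.
    - unfold letter; destruct (w n); lra.
    - apply pow_le; lra. }
  unfold R_dist in HN. rewrite Rabs_right in HN; lra.
Qed.

Lemma W_eq_1_half_multiple lam y :
  lam <> 0 -> W lam y = 1 -> exists k : Z, y = IZR k * lam / 2.
Proof.
  intros Hlam HW. unfold W in HW.
  set (t := 2 * PI * y / lam) in HW.
  assert (Hsin : sin t = 0).
  { pose proof (sin2_cos2 t) as Hpyth. unfold Rsqr in Hpyth. simpl in HW.
    assert (Hsq : sin t * sin t = 0) by nra.
    destruct (Rmult_integral _ _ Hsq); assumption. }
  destruct (sin_eq_0_0 _ Hsin) as [k Hk]. exists k.
  unfold t in Hk. pose proof PI_RGT_0.
  apply (Rmult_eq_reg_l (2 * PI)); [| nra].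
  replace (2 * PI * (IZR k * lam / 2)) with (IZR k * PI * lam) by field.
  rewrite <- Hk. field. assumption.
Qed.

Lemma orb_nonneg lam w x i : 0 < lam -> 0 <= x -> 0 <= orb lam w x i.
Proof.
  intros Hlam Hx. induction i as [| i IH]; simpl; [assumption |].
  unfold tau, letter. destruct (w (S i)); nra.
Qed.

Lemma tau_le_of_W_eq_1 lam b y :
  0 < lam <= 1 -> 0 <= y ->
  W lam y = 1 -> W lam (tau lam b y) = 1 -> tau lam b y <= y.
Proof.
  intros Hlam Hy HWy HWz.
  destruct (W_eq_1_half_multiple lam y ltac:(lra) HWy) as [a Ha].
  destruct (W_eq_1_half_multiple lam _ ltac:(lra) HWz) as [c Hc].
  assert (Ha0 : 0 <= IZR a) by nra.
  assert (Hc_def : IZR c = lam * IZR a + 2 * letter b).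
  { apply (Rmult_eq_reg_l (lam / 2)); [| lra].
    replace (lam / 2 * IZR c) with (tau lam b y) by (rewrite Hc; field).
    unfold tau. rewrite Ha. field. }
  assert (Hca : (c <= a)%Z).
  { assert (Hlt : IZR c < IZR (a + 1)).
    { rewrite plus_IZR, Hc_def. unfold letter; destruct b; nra. }
    apply lt_IZR in Hlt. lia. }
  apply IZR_le in Hca. rewrite Hc, Ha. nra.
Qed.

Lemma nonincreasing_upto (u : nat -> R) (p : nat) :
  (forall i, (i < p)%nat -> u (S i) <= u i) ->
  forall i j, (i <= j <= p)%nat -> u j <= u i.
Proof.
  intros Hdec i j. induction j as [| j IH]; intros Hij.
  - replace i with 0%nat by lia. lra.
  - destruct (Nat.eq_dec i (S j)) as [-> | Hne]; [lra |].
    apply Rle_trans with (u j); [apply Hdec; lia | apply IH; lia].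
Qed.

Theorem theorem3p3 (lam : R) (Hlam : 0 < lam < 1) :
  ~ (exists (p : nat) (w : nat -> bool) (x : R),
        (2 <= p)%nat /\ is_W_cycle lam w x p).
Proof.
  intros [p [w [x [Hp [HX [[_ [Hclose Hmin]] HW]]]]]].
  assert (Hx : 0 <= x) by (apply (in_XL_nonneg lam); [lra | assumption]).
  assert (HW_upto : forall i, (i <= p)%nat -> W lam (orb lam w x i) = 1).
  { intros i Hi. destruct (Nat.eq_dec i p) as [-> | Hne].
    - rewrite Hclose. apply (HW 0%nat). lia.
    - apply HW. lia. }
  assert (Hdec : forall i, (i < p)%nat -> orb lam w x (S i) <= orb lam w x i).
  { intros i Hi. apply tau_le_of_W_eq_1; [lra | apply orb_nonneg; lra | |];
      [| change (tau lam (w (S i)) (orb lam w x i)) with (orb lam w x (S i))];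
      apply HW_upto; lia. }
  pose proof (nonincreasing_upto _ _ Hdec) as Hmono.
  apply (Hmin 1%nat); [lia |]. apply Rle_antisym.
  - apply (Hmono 0%nat 1%nat). lia.
  - apply Rle_trans with (orb lam w x p); [rewrite Hclose; lra | apply Hmono; lia].
Qed.
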